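(* Let $\mathbf{\Omega} \in \mathbb{R}^{p \times p}$ be symmetric positive definite, $\mathbf{x} \in \mathbb{R}^p$ and $\epsilon > 0$, and consider $$\sup_{\mathbf{\Delta} \in \mathbb{R}^p,\ \|\mathbf{\Delta}\|_2 \leq \epsilon} (\mathbf{x} + \mathbf{\Delta})^{\intercal}\mathbf{\Omega}(\mathbf{x} + \mathbf{\Delta}).$$ Let $\mu^{\star} \in \mathbb{R}$ be an optimal solution of the one-dimensional problem $$\max_{\mu}\ -\tfrac{1}{2}\mathbf{x}^{\intercal}\mathbf{\Omega}(\mu\mathbf{I} - \mathbf{\Omega})^{-1}\mathbf{\Omega}\mathbf{x} - \tfrac{\mu\epsilon^2}{2} \quad \text{subject to } \mu\mathbf{I} - \mathbf{\Omega} \succeq 0,$$ with $\mu^{\star}\mathbf{I} - \mathbf{\Omega}$ invertible. Then $\mathbf{\Delta}^{\star} = (\mu^{\star}\mathbf{I} - \mathbf{\Omega})^{-1}\mathbf{\Omega}\mathbf{x}$ is an optimal solution of the first problem.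
   Context: $\mathbf{I}$ is the $p \times p$ identity and $\succeq 0$ denotes positive semidefiniteness. *)

From HB Require Import structures.
From mathcomp Require Import all_boot all_order all_algebra.
From mathcomp Require Import reals.
Set Implicit Arguments. Unset Strict Implicit. Unset Printing Implicit Defensive.
Import Order.TTheory GRing.Theory Num.Theory.
Local Open Scope ring_scope.

Definition quad (R : realType) (p : nat) (A : 'M[R]_p) (v : 'cV[R]_p) : R :=
  (v^T *m A *m v) 0 0.

Definition symmetricmx (R : realType) (p : nat) (A : 'M[R]_p) : Prop := A^T = A.

Definition psdmx (R : realType) (p : nat) (A : 'M[R]_p) : Prop :=
  symmetricmx A /\ forall v : 'cV[R]_p, 0 <= quad A v.

Definition pdmx (R : realType) (p : nat) (A : 'M[R]_p) : Prop :=
  symmetricmx A /\ forall v : 'cV[R]_p, v != 0 -> 0 < quad A v.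

Definition norm2 (R : realType) (p : nat) (v : 'cV[R]_p) : R :=
  Num.sqrt (\sum_(i < p) v i 0 ^+ 2).

(* objective of the one-dimensional (dual) problem, for mu with mu I - Omega invertible *)
Definition dual_obj (R : realType) (p : nat) (Om : 'M[R]_p) (x : 'cV[R]_p) (eps mu : R) : R :=
  - (1/2) * (x^T *m Om *m invmx (mu%:M - Om) *m Om *m x) 0 0 - mu * eps ^+ 2 / 2.

(* Since [mu_star I - Om] is positive semidefinite and invertible, it is
   coercive, [mu_star I - Om >= c I] with [c > 0]; hence every [mu_star - t]
   with [|t| <= c/2] is dual feasible.  Comparing the dual objective at
   [mu_star] and [mu_star - t] through the resolvent identity gives
   [t (eps^2 - |Delta_star|^2) <= O(t^2)] for both signs of [t], so
   [|Delta_star| = eps].  Then [Om (x + Delta_star) = mu_star Delta_star] with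
   [mu_star >= 0], and for [Delta = Delta_star + d] with [|Delta| <= eps],
   [q(x + Delta) - q(x + Delta_star) = 2 mu_star <d, Delta_star> + d^T Om d
      <= mu_star (2 <d, Delta_star> + |d|^2)
       = mu_star (|Delta|^2 - eps^2) <= 0]. *)

From HB Require Import structures.
From mathcomp Require Import all_boot all_order all_algebra.
From mathcomp Require Import reals.
From mathcomp Require Import ring lra.
Import Order.TTheory GRing.Theory Num.Theory.
Local Open Scope ring_scope.
Set Implicit Arguments. Unset Strict Implicit.

Lemma eq0_of_linear_le_sqr (R : realFieldType) (c B D : R) :
  0 < c -> (forall t, - c <= t <= c -> t * D <= t ^+ 2 * B) -> D = 0.
Proof.
move=> c_gt0 le_tD.
have normD_le d : 0 < d -> d <= c -> `|D| <= d * `|B|.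
  move=> d_gt0 d_le_c.
  have dB_le : d ^+ 2 * B <= d ^+ 2 * `|B| by rewrite ler_wpM2l ?sqr_ge0 ?ler_norm.
  have le_dD : d * D <= d * (d * `|B|).
    rewrite mulrA -expr2 (le_trans _ dB_le) // le_tD //; apply/andP; split; lra.
  have le_NdD : d * - D <= d * (d * `|B|).
    rewrite mulrA -expr2 (le_trans _ dB_le) // mulrN -mulNr -sqrrN le_tD //.
    apply/andP; split; lra.
  by rewrite ler_norml lerNl -(ler_pM2l d_gt0) le_NdD -(ler_pM2l d_gt0) le_dD.
apply/eqP; rewrite -normr_le0; apply/ler_addgt0Pr => e e_gt0; rewrite add0r.
have B1_gt0 : 0 < `|B| + 1 by rewrite ltr_wpDl.
set d := Num.min c (e / (`|B| + 1)).
have d_gt0 : 0 < d by rewrite lt_min c_gt0 divr_gt0.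
have d_le : d * (`|B| + 1) <= e by rewrite -ler_pdivlMr // ge_min lexx orbT.
apply: le_trans (normD_le d d_gt0 _) _; first by rewrite ge_min lexx.
by apply: le_trans d_le; rewrite ler_wpM2l ?lerDl // ltW.
Qed.

Section Dot.
Variables (R : realDomainType) (p : nat).
Implicit Types (u v w : 'cV[R]_p) (M : 'M[R]_p).

Definition dot u v : R := (u^T *m v) 0 0.

Lemma dotE u v : dot u v = \sum_i u i 0 * v i 0.
Proof. by rewrite /dot mxE; apply: eq_bigr => i _; rewrite mxE. Qed.

Lemma dotC u v : dot u v = dot v u.
Proof. by rewrite !dotE; apply: eq_bigr => i _; rewrite mulrC. Qed.

Lemma dotDl u v w : dot (u + v) w = dot u w + dot v w.
Proof. by rewrite /dot linearD /= mulmxDl mxE. Qed.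

Lemma dotDr u v w : dot u (v + w) = dot u v + dot u w.
Proof. by rewrite /dot mulmxDr mxE. Qed.

Lemma dotZl a u v : dot (a *: u) v = a * dot u v.
Proof. by rewrite /dot linearZ /= -scalemxAl mxE. Qed.

Lemma dotZr a u v : dot u (a *: v) = a * dot u v.
Proof. by rewrite /dot -scalemxAr mxE. Qed.

Lemma dotNl u v : dot (- u) v = - dot u v.
Proof. by rewrite -scaleN1r dotZl mulN1r. Qed.

Lemma dotNr u v : dot u (- v) = - dot u v.
Proof. by rewrite -scaleN1r dotZr mulN1r. Qed.

Lemma dotBl u v w : dot (u - v) w = dot u w - dot v w.
Proof. by rewrite dotDl dotNl. Qed.

Lemma dotBr u v w : dot u (v - w) = dot u v - dot u w.
Proof. by rewrite dotDr dotNr. Qed.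

Lemma dot_mulmxl M u v : dot (M *m u) v = dot u (M^T *m v).
Proof. by rewrite /dot trmx_mul mulmxA. Qed.

Lemma dot_ge0 u : 0 <= dot u u.
Proof. by rewrite dotE; apply: sumr_ge0 => i _; rewrite -expr2 sqr_ge0. Qed.

Lemma sqr_coord_le_dot u i : u i 0 ^+ 2 <= dot u u.
Proof.
rewrite dotE (bigD1 i) //= -expr2 lerDl.
by apply: sumr_ge0 => j _; rewrite -expr2 sqr_ge0.
Qed.

Lemma dot_gt0 u : u != 0 -> 0 < dot u u.
Proof.
apply: contra_neqT; rewrite -leNgt => dot_le0.
apply/matrixP => i j; rewrite (ord1 j) mxE; apply/eqP.
rewrite -sqrf_eq0 eq_le sqr_ge0 andbT.
exact: le_trans (sqr_coord_le_dot u i) dot_le0.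
Qed.

End Dot.

Section QuadraticForm.
Variables (R : realType) (p : nat).
Implicit Types (A M : 'M[R]_p) (u v w : 'cV[R]_p).

Lemma quadE A v : quad A v = dot v (A *m v).
Proof. by rewrite /quad /dot mulmxA. Qed.

Lemma quad0 A : quad A 0 = 0.
Proof. by rewrite /quad mulmx0 mxE. Qed.

Lemma quadZ A a v : quad A (a *: v) = a ^+ 2 * quad A v.
Proof. by rewrite !quadE -scalemxAr dotZl dotZr mulrA expr2. Qed.

Lemma quadN A v : quad A (- v) = quad A v.
Proof. by rewrite -scaleN1r quadZ sqrrN expr1n mul1r. Qed.

Lemma quadD A u v : A^T = A ->
  quad A (u + v) = quad A u + 2 * dot v (A *m u) + quad A v.
Proof.
move=> sA; rewrite !quadE mulmxDr !(dotDl, dotDr).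
by rewrite [dot u (A *m v)]dotC dot_mulmxl sA; ring.
Qed.

Lemma quadB A M v : quad (A - M) v = quad A v - quad M v.
Proof. by rewrite !quadE mulmxBl dotBr. Qed.

Lemma quad_scalar a v : quad a%:M v = a * dot v v.
Proof. by rewrite quadE mul_scalar_mx dotZr. Qed.

Lemma pdmx_psd A : pdmx A -> psdmx A.
Proof.
case=> sA pdA; split=> // v; have [->|v_neq0] := eqVneq v 0.
  by rewrite quad0.
exact/ltW/pdA.
Qed.

Lemma quad_le_sum_norm M v : quad M v <= (\sum_k \sum_i `|M i k|) * dot v v.
Proof.
rewrite /quad mxE mulr_suml; apply: ler_sum => k _.
rewrite mxE mulr_suml mulr_suml; apply: ler_sum => i _; rewrite mxE.
have vi_le := sqr_coord_le_dot v i; have vk_le := sqr_coord_le_dot v k.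
set a := v i 0 in vi_le *; set b := v k 0 in vk_le *; set m := M i k.
have le_norm : a * m * b <= `|m| * (`|a| * `|b|).
  by rewrite -!normrM mulrCA mulrA ler_norm.
apply: (le_trans le_norm); rewrite ler_wpM2l //.
have := sqr_ge0 (`|a| - `|b|); rewrite -(real_normK (num_real a)) in vi_le.
rewrite -(real_normK (num_real b)) in vk_le; lra.
Qed.

Lemma norm2E v : norm2 v = Num.sqrt (dot v v).
Proof. by rewrite /norm2 dotE; congr Num.sqrt; apply: eq_bigr => i _; rewrite expr2. Qed.

Lemma norm2_le v (e : R) : 0 <= e -> (norm2 v <= e) = (dot v v <= e ^+ 2).
Proof.
by move=> e_ge0; rewrite norm2E -{1}(ger0_norm e_ge0) -sqrtr_sqr ler_sqrt ?sqr_ge0.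
Qed.

End QuadraticForm.

Section Coercive.
Variables (R : realType) (p : nat).
Implicit Types (A : 'M[R]_p) (u v : 'cV[R]_p) (c t : R).

Definition coercive c A := forall v, c * dot v v <= quad A v.

Lemma coercive_le c c' A : c' <= c -> coercive c A -> coercive c' A.
Proof. by move=> le_c coA v; apply: le_trans (coA v); rewrite ler_wpM2r ?dot_ge0. Qed.

Lemma coercive_shift c t A : coercive c A -> coercive (c - t) (A - t%:M).
Proof. by move=> coA v; rewrite quadB quad_scalar mulrBl lerD2r. Qed.

Lemma coercive_psd c A : A^T = A -> 0 <= c -> coercive c A -> psdmx A.
Proof.
move=> sA c_ge0 coA; split=> // v.
by apply: le_trans (coA v); rewrite mulr_ge0 ?dot_ge0.
Qed.

Lemma coercive_unitmx c A : 0 < c -> coercive c A -> A \in unitmx.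
Proof.
move=> c_gt0 coA; rewrite unitmxE unitfE; apply/det0P => -[v v_neq0 vA0].
have := coA v^T; rewrite /quad trmxK vA0 mul0mx mxE.
rewrite pmulr_rle0 // leNgt dot_gt0 //.
by rewrite -(inj_eq (@trmx_inj _ _ _)) trmx0 trmxK.
Qed.

Lemma quad_invmx_le c A u : 0 < c -> coercive c A ->
  quad (invmx A) u <= dot u u / c.
Proof.
move=> c_gt0 coA; set w := invmx A *m u.
have Aw : A *m w = u by rewrite mulKVmx // (coercive_unitmx c_gt0 coA).
have := coA w; rewrite quadE Aw dotC -/(quad _ _) => cw_le.
have := dot_ge0 (u - c *: w); rewrite quadE -/w.
rewrite dotBl !dotBr !dotZl !dotZr (dotC w u) ler_pdivlMr //.
have : c * (c * dot w w) <= c * dot u w by rewrite ler_wpM2l // ltW.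
nra.
Qed.

Lemma psdmx_unit_coercive A : psdmx A -> A \in unitmx ->
  exists2 c, 0 < c & coercive c A.
Proof.
case=> sA psdA A_unit; set K := (\sum_k \sum_i `|invmx A i k|) + 1.
have K_gt0 : 0 < K.
  by rewrite ltr_wpDl // sumr_ge0 // => k _; rewrite sumr_ge0.
exists K^-1; first by rewrite invr_gt0.
move=> v; set w := invmx A *m v.
have Aw : A *m w = v by rewrite mulKVmx.
have w_le : quad A w <= K * dot v v.
  rewrite quadE Aw dotC -quadE; apply: le_trans (quad_le_sum_norm _ v) _.
  by rewrite ler_wpM2r ?dot_ge0 ?lerDl.
have wAv : dot w (A *m v) = dot v v by rewrite -{1}sA -dot_mulmxl Aw.
(* [quad A (K v - A^-1 v) >= 0] and [w_le] give [K (K quad A v - |v|^2) >= 0]. *)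
have := psdA (K *: v - w).
rewrite quadD // quadN quadZ -scalemxAr dotZr dotNl wAv => psd_Kvw.
rewrite mulrC ler_pdivrMr //.
have := dot_ge0 v; nra.
Qed.

End Coercive.

Section TrustRegion.
Variables (R : realType) (p : nat).
Implicit Types (A Om : 'M[R]_p) (b u v x : 'cV[R]_p) (c eps mu t : R).

Lemma dot_invmx_shift A t u b : A^T = A -> (A - t%:M) \in unitmx -> A *m u = b ->
  dot b (invmx (A - t%:M) *m b) - dot b u
    = t * (dot u u + t * quad (invmx (A - t%:M)) u).
Proof.
move=> sA At_unit Au; set C := invmx (A - t%:M).
have b_eq : b = (A - t%:M) *m u + t *: u by rewrite mulmxBl mul_scalar_mx subrK.
have Cb : C *m b = u + t *: (C *m u) by rewrite b_eq mulmxDr mulKmx // -scalemxAr.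
have ACu : A *m (C *m u) = u + t *: (C *m u).
  by rewrite -{1}(subrK t%:M A) mulmxDl mulKVmx // mul_scalar_mx.
have bCu : dot b (C *m u) = dot u u + t * quad C u.
  by rewrite -Au dot_mulmxl sA ACu dotDr dotZr quadE.
by rewrite Cb dotDr dotZr bCu addrAC subrr add0r.
Qed.

Lemma tr_scalar_mxB mu Om : Om^T = Om -> (mu%:M - Om)^T = mu%:M - Om.
Proof. by move=> sO; rewrite linearB /= tr_scalar_mx sO. Qed.

Lemma dual_objE Om x eps mu : Om^T = Om ->
  dual_obj Om x eps mu
    = - (1/2) * dot (Om *m x) (invmx (mu%:M - Om) *m (Om *m x)) - mu * eps ^+ 2 / 2.
Proof. by move=> sO; rewrite /dual_obj /dot trmx_mul sO !mulmxA. Qed.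

Lemma dual_obj_shift Om x eps mu t u : Om^T = Om ->
  (mu%:M - Om) \in unitmx -> ((mu - t)%:M - Om) \in unitmx ->
  (mu%:M - Om) *m u = Om *m x ->
  dual_obj Om x eps (mu - t) - dual_obj Om x eps mu
    = t / 2 * (eps ^+ 2 - dot u u - t * quad (invmx ((mu - t)%:M - Om)) u).
Proof.
move=> sO A_unit At_unit Au.
have shift : (mu - t)%:M - Om = mu%:M - Om - t%:M by rewrite raddfB /= addrAC.
have A_inv_b : invmx (mu%:M - Om) *m (Om *m x) = u by rewrite -Au mulKmx.
rewrite shift in At_unit *; rewrite !dual_objE // shift A_inv_b.
move: (dot_invmx_shift (tr_scalar_mxB mu sO) At_unit Au).
by move=> /eqP; rewrite subr_eq => /eqP ->; ring.
Qed.

Lemma dual_opt_norm_eq Om x eps mu c u : Om^T = Om -> 0 < c ->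
  coercive c (mu%:M - Om) -> (mu%:M - Om) *m u = Om *m x ->
  (forall mu', psdmx (mu'%:M - Om) -> (mu'%:M - Om) \in unitmx ->
     dual_obj Om x eps mu' <= dual_obj Om x eps mu) ->
  dot u u = eps ^+ 2.
Proof.
move=> sO c_gt0 coA Au opt.
have c2_gt0 : 0 < c / 2 by rewrite divr_gt0.
have coAt t : - (c / 2) <= t <= c / 2 -> coercive (c / 2) ((mu - t)%:M - Om).
  case/andP=> _ t_le; rewrite raddfB /= addrAC.
  by apply: coercive_le (coercive_shift t coA); lra.
suff : eps ^+ 2 - dot u u = 0 by move/eqP; rewrite subr_eq0 => /eqP.
apply: (eq0_of_linear_le_sqr (B := dot u u / (c / 2)) c2_gt0) => t t_in.
have At_unit := coercive_unitmx c2_gt0 (coAt t t_in).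
have At_psd := coercive_psd (tr_scalar_mxB _ sO) (ltW c2_gt0) (coAt t t_in).
have le_opt := opt _ At_psd At_unit.
rewrite -subr_le0 (dual_obj_shift eps sO (coercive_unitmx c_gt0 coA) At_unit Au) in le_opt.
have := quad_invmx_le u c2_gt0 (coAt t t_in); have := sqr_ge0 t; nra.
Qed.

Lemma trust_region_max Om mu x u v : Om^T = Om -> 0 <= mu ->
  psdmx (mu%:M - Om) -> (mu%:M - Om) *m u = Om *m x -> dot v v <= dot u u ->
  quad Om (x + v) <= quad Om (x + u).
Proof.
move=> sO mu_ge0 [_ psdA] Au le_vu.
have Om_xu : Om *m (x + u) = mu *: u by rewrite mulmxDr -Au mulmxBl mul_scalar_mx subrK.
move: le_vu; have [d ->] : exists d, v = u + d by exists (v - u); rewrite addrC subrK.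
move=> le_ud; rewrite addrA [quad Om (x + u + d)]quadD // Om_xu dotZr.
have le_d : quad Om d <= mu * dot d d.
  by have := psdA d; rewrite quadB quad_scalar subr_ge0.
have : 2 * dot d u + dot d d <= 0.
  by move: le_ud; rewrite dotDl !dotDr (dotC u d); lra.
nra.
Qed.

End TrustRegion.

Unset Implicit Arguments. Set Strict Implicit.

Theorem theorem5 (R : realType) (p : nat) (Om : 'M[R]_p) (x : 'cV[R]_p)
  (eps mu_star : R) :
  pdmx Om -> 0 < eps ->
  (* mu_star is feasible, with mu_star I - Omega invertible *)
  psdmx (mu_star%:M - Om) -> (mu_star%:M - Om) \in unitmx ->
  (* mu_star is optimal among feasible mu (where the objective is defined) *)
  (forall mu : R, psdmx (mu%:M - Om) -> (mu%:M - Om) \in unitmx ->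
     dual_obj Om x eps mu <= dual_obj Om x eps mu_star) ->
  let Delta_star := invmx (mu_star%:M - Om) *m Om *m x in
  norm2 Delta_star <= eps /\
  (forall Delta : 'cV[R]_p, norm2 Delta <= eps ->
     quad Om (x + Delta) <= quad Om (x + Delta_star)).
Proof.
move=> pdO eps_gt0 psdA A_unit opt Delta_star.
have sO : Om^T = Om := pdO.1.
set u := invmx (mu_star%:M - Om) *m (Om *m x).
have -> : Delta_star = u by rewrite /Delta_star -mulmxA.
have Au : (mu_star%:M - Om) *m u = Om *m x by rewrite mulKVmx.
have [c c_gt0 coA] := psdmx_unit_coercive psdA A_unit.
have uu : dot u u = eps ^+ 2 := dual_opt_norm_eq sO c_gt0 coA Au opt.
have mu_ge0 : 0 <= mu_star.
  have := psdA.2 u; rewrite quadB quad_scalar uu subr_ge0.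
  have := (pdmx_psd pdO).2 u; have := exprn_gt0 2 eps_gt0; nra.
split; first by rewrite norm2E uu sqrtr_sqr gtr0_norm.
move=> Delta; rewrite (norm2_le _ (ltW eps_gt0)) -uu.
exact: trust_region_max sO mu_ge0 psdA Au.
Qed.
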